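(* Let $P=[0,1]$, let $l$ be a positive integer, $r=2^l-1$, $\sigma_r=\sum_{i=r+1}^{2r+1}\frac1i$, and $Q=\{q_1,\dots,q_r\}$ with $q_i=\frac{1}{\sigma_r}\sum_{j=r+1}^{r+i}\frac1j$. Then there exists an ordering $\tau$ of $Q$ such that the following online algorithm satisfies $OPT_A(S;P)\le 2\sigma_r\cdot\min_{t\le T}d_{min}(t;X)$ (with $X$ its output) for every instance $S$ whose maximum number $m$ of simultaneously present points satisfies $m\le r$. The algorithm maintains a set $\hat Q$ of positions ever used, each labelled occupied or vacant (initially empty); when a point departs its position becomes vacant; when a point arrives, if some position in $\hat Q$ is vacant the point is put at an arbitrary vacant position (now occupied); otherwise, if $Q\not\subseteq\hat Q$ the point is put at the first position of $Q\setminus\hat Q$ according to $\tau$, and if $Q\subseteq\hat Q$ it is put at the midpoint of a largest interval into which $[0,1]$ is divided by $\hat Q$; in both latter cases the new position is added to $\hat Q$ as occupied.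
   Context: Distances are Euclidean; $\partial P=\{0,1\}$. An instance is a sequence $S=((s_1,d_1),\dots,(s_n,d_n))$ with $s_i<d_i$, $0=s_1\le\dots\le s_n$; point $i$ is present at time $t$ iff $s_i\le t\le d_i$; $T=\max_i d_i$; $m=\max_{t\le T}|\{i:s_i\le t\le d_i\}|$. For locations $X=(X_1,\dots,X_n)\in P^n$, $d_{min}(t;X)=\min\{dis(X_i,\partial P),dis(X_i,X_j)\}$ over present points $i\ne j$ at time $t$, and $OPT_A(S;P)=\max_X\min_{t\le T}d_{min}(t;X)$. The algorithm is online: it places each arriving point irrevocably without knowing future events. *)

From Stdlib Require Import Reals Lra Lia List Permutation.
From Coquelicot Require Import Coquelicot.
Open Scope R_scope.

(* ---------- Instances ----------
   An instance with n points: point i (0-based, i < n) has arrival s i and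
   departure d i.  Paper's (s_1,d_1),...,(s_n,d_n) = (s 0, d 0),...,(s (n-1), d (n-1)). *)
Definition valid_instance (n : nat) (s d : nat -> R) : Prop :=
  (0 < n)%nat /\ s 0%nat = 0 /\
  (forall i, (i < n)%nat -> s i < d i) /\
  (forall i, (S i < n)%nat -> s i <= s (S i)).

Definition present (s d : nat -> R) (i : nat) (t : R) : Prop := s i <= t <= d i.

Definition Tmax (n : nat) (d : nat -> R) : R :=
  fold_right Rmax 0 (map d (seq 0 n)).

Definition present_b (s d : nat -> R) (t : R) (i : nat) : bool :=
  if Rle_dec (s i) t then (if Rle_dec t (d i) then true else false) else false.
Definition npresent (n : nat) (s d : nat -> R) (t : R) : nat :=
  length (filter (present_b s d t) (seq 0 n)).

Definition dist_bd (x : R) : R := Rmin (Rabs (x - 0)) (Rabs (x - 1)).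

(* d_min(t;X): min over present points of boundary distances and pairwise
   distances (as an infimum; +oo if no point is present). *)
Definition dmin (n : nat) (s d : nat -> R) (X : nat -> R) (t : R) : Rbar :=
  Glb_Rbar (fun y =>
    (exists i, (i < n)%nat /\ present s d i t /\ y = dist_bd (X i)) \/
    (exists i j, (i < n)%nat /\ (j < n)%nat /\ i <> j /\
       present s d i t /\ present s d j t /\ y = Rabs (X i - X j))).

Definition minval (n : nat) (s d : nat -> R) (X : nat -> R) : Rbar :=
  Rbar_glb (fun v => exists t, 0 <= t <= Tmax n d /\ v = dmin n s d X t).

Definition in_Pn (n : nat) (X : nat -> R) : Prop :=
  forall i, (i < n)%nat -> 0 <= X i <= 1.

Definition OPT_A (n : nat) (s d : nat -> R) : Rbar :=
  Rbar_lub (fun v => exists X, in_Pn n X /\ v = minval n s d X).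

Definition rsum (a k : nat) : R := fold_right Rplus 0 (map (fun j => / INR j) (seq a k)).
Definition sigmaH (r : nat) : R := rsum (S r) (S r).
Definition qpos (r i : nat) : R := / sigmaH r * rsum (S r) i.
Definition Qlist (r : nat) : list R := map (qpos r) (seq 1 r).

(* ---------- The online algorithm ----------
   Points are processed in arrival order i = 0,1,...,n-1.  When point i
   arrives (at time s i), the points j < i with d j < s i have departed and
   the points j < i with s i <= d j are still present (presence is on the
   closed interval [s_j,d_j]). *)
Definition Qhat (X : nat -> R) (i : nat) (p : R) : Prop :=
  exists j, (j < i)%nat /\ X j = p.
Definition occupied (s d X : nat -> R) (i : nat) (p : R) : Prop :=
  exists j, (j < i)%nat /\ s i <= d j /\ X j = p.
Definition vacant (s d X : nat -> R) (i : nat) (p : R) : Prop :=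
  Qhat X i p /\ ~ occupied s d X i p.

Definition first_not_in (tau : list R) (A : R -> Prop) (q : R) : Prop :=
  exists k, (k < length tau)%nat /\ nth k tau 0 = q /\ ~ A q /\
    forall k', (k' < k)%nat -> A (nth k' tau 0).

Definition largest_gap_mid (A : R -> Prop) (x : R) : Prop :=
  let B := fun c => A c \/ c = 0 \/ c = 1 in
  exists a b, B a /\ B b /\ a < b /\ (forall c, B c -> ~ (a < c < b)) /\
    (forall a' b', B a' -> B b' -> a' < b' -> (forall c, B c -> ~ (a' < c < b')) ->
        b' - a' <= b - a) /\
    x = (a + b) / 2.

(* X is a possible output of the (nondeterministic) algorithm with the
   position set Q and the ordering tau of Q on the instance (n,s,d). *)
Definition alg_run (Q tau : list R) (n : nat) (s d X : nat -> R) : Prop :=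
  forall i, (i < n)%nat ->
    ((exists p, vacant s d X i p) -> vacant s d X i (X i)) /\
    ((~ exists p, vacant s d X i p) ->
       (exists q, In q Q /\ ~ Qhat X i q) -> first_not_in tau (Qhat X i) (X i)) /\
    ((~ exists p, vacant s d X i p) ->
       (forall q, In q Q -> Qhat X i q) -> largest_gap_mid (Qhat X i) (X i)).

From Stdlib Require Import Reals List Lia Lra Permutation Classical.
From Coquelicot Require Import Coquelicot.
Import ListNotations.

(* With q_0 = 0 and q_(r+1) = 1, the positions satisfy
   q_b - q_a >= (b - a) / (sigma_r (r + 1 + b)).  Ordering the indices 1 .. 2^l - 1 by
   dyadic refinement (the odd multiples of 2^(l-1), then of 2^(l-2), ...), any two of the
   first c indices, or of 0 and 2^l, satisfy 2^l + b <= 2 (c + 1) (b - a); so the first c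
   positions are 1 / (2 sigma_r (c + 1)) apart from each other and from the boundary.
   Since at most r points are ever present, the algorithm reuses a vacant position or takes
   the next one of tau, and it takes the c-th only when c points are present.  Thus its
   positions form a prefix of length c of tau with c <= N, the number of points present
   at some time; at that time any placement has d_min <= 1 / (N + 1), because N points
   more than delta apart and more than delta away from 0 and 1 force (N + 1) delta < 1. *)

Lemma NoDup_firstn {A} (l : list A) c : NoDup l -> NoDup (firstn c l).
Proof. rewrite <- (firstn_skipn c l) at 1. apply NoDup_app_remove_r. Qed.

Lemma In_firstn {A} (l : list A) c x : In x (firstn c l) -> In x l.
Proof. rewrite <- (firstn_skipn c l) at 2. intro H. apply in_app_iff. now left. Qed.

Lemma nth_In_firstn {A} (l : list A) c k x0 :
  (k < c)%nat -> (k < length l)%nat -> In (nth k l x0) (firstn c l).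
Proof.
  intros Hkc Hkl. replace (nth k l x0) with (nth k (firstn c l) x0).
  - apply nth_In. rewrite length_firstn. lia.
  - rewrite nth_firstn, (proj2 (Nat.ltb_lt k c) Hkc). reflexivity.
Qed.

Lemma nth_notin_firstn {A} (l : list A) c x0 :
  NoDup l -> (c < length l)%nat -> ~ In (nth c l x0) (firstn c l).
Proof.
  intros Hnd Hc Hin. apply (In_nth _ _ x0) in Hin as [k [Hk E]].
  rewrite length_firstn in Hk. rewrite nth_firstn, (proj2 (Nat.ltb_lt k c)) in E by lia.
  apply (proj1 (NoDup_nth l x0) Hnd) in E; lia.
Qed.

Lemma firstn_S_nth {A} (l : list A) c x0 :
  (c < length l)%nat -> firstn (S c) l = firstn c l ++ [nth c l x0].
Proof.
  revert c; induction l as [|a l IH]; intros c Hc; simpl in *; [lia |].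
  destruct c; [reflexivity |]. simpl. f_equal. apply IH. lia.
Qed.

Lemma firstn_seq p len st : (p <= len)%nat -> firstn p (seq st len) = seq st p.
Proof.
  revert len st; induction p as [|p IH]; intros [|len] st H; simpl; try lia; auto.
  f_equal. apply IH. lia.
Qed.

Lemma NoDup_preimage {A B} (f : A -> B) (P : A -> Prop) (L : list B) : NoDup L ->
  (forall y, In y L -> exists x, P x /\ f x = y) ->
  exists J, NoDup J /\ length J = length L /\ forall x, In x J -> P x /\ In (f x) L.
Proof.
  induction L as [|y L IH]; intros Hnd Hpre.
  - exists []. split; [constructor | split; [reflexivity | intros x []]].
  - inversion Hnd as [|? ? Hy HL]; subst.
    destruct IH as [J [HJ [HlJ HJP]]]; [exact HL | intros z Hz; apply Hpre; now right |].
    destruct (Hpre y (or_introl eq_refl)) as [x [Hx <-]].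
    exists (x :: J). split; [| split].
    + constructor; [| exact HJ]. intros HxJ. now apply HJP in HxJ as [_ ?].
    + simpl. now rewrite HlJ.
    + intros z [<- | Hz]; [now split; [| left] |].
      apply HJP in Hz as [? ?]. split; [| right]; assumption.
Qed.

Open Scope nat_scope.

Fixpoint dyadic_order (l : nat) : list nat :=
  match l with
  | O => []
  | S l' => map (fun x => 2 * x) (dyadic_order l') ++ map (fun j => 2 * j + 1) (seq 0 (2 ^ l'))
  end.

Lemma pow2_ge_1 l : 1 <= 2 ^ l.
Proof. apply Nat.le_succ_l, Nat.neq_0_lt_0, Nat.pow_nonzero; lia. Qed.

Lemma length_dyadic_order l : length (dyadic_order l) = 2 ^ l - 1.
Proof.
  induction l as [|l IH]; simpl; [reflexivity|].
  rewrite length_app, !length_map, length_seq, IH. pose proof (pow2_ge_1 l). lia.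
Qed.

Lemma in_dyadic_order l x : In x (dyadic_order l) <-> 1 <= x < 2 ^ l.
Proof.
  revert x; induction l as [|l IH]; intro x; simpl; [lia|].
  rewrite in_app_iff, !in_map_iff. split.
  - intros [[y [<- Hy]] | [j [<- Hj]]].
    + apply IH in Hy; lia.
    + apply in_seq in Hj; lia.
  - intro Hx. destruct (Nat.Even_or_Odd x) as [[y ->] | [y ->]].
    + left; exists y; split; [lia | apply IH; lia].
    + right; exists y; split; [lia | apply in_seq; lia].
Qed.

Lemma NoDup_dyadic_order l : NoDup (dyadic_order l).
Proof.
  induction l as [|l IH]; simpl; [constructor|].
  apply NoDup_app.
  - apply FinFun.Injective_map_NoDup; [intros a b; lia | exact IH].
  - apply FinFun.Injective_map_NoDup; [intros a b; lia | apply seq_NoDup].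
  - intros x Hx Hx'. apply in_map_iff in Hx as [y [<- _]], Hx' as [z [Hz _]]. lia.
Qed.

Lemma dyadic_order_perm l : Permutation (dyadic_order l) (seq 1 (2 ^ l - 1)).
Proof.
  apply NoDup_Permutation; [apply NoDup_dyadic_order | apply seq_NoDup |].
  intro x. rewrite in_dyadic_order, in_seq. pose proof (pow2_ge_1 l). lia.
Qed.

(* Indices of the first [c] positions of tau and of the boundary points q_0 = 0, q_(2^l) = 1. *)
Definition dyadic_grid (l c x : nat) : Prop :=
  x = 0 \/ x = 2 ^ l \/ In x (firstn c (dyadic_order l)).

Lemma dyadic_grid_S_low l c x : c <= 2 ^ l - 1 ->
  dyadic_grid (S l) c x -> exists y, x = 2 * y /\ dyadic_grid l c y.
Proof.
  intros Hc [-> | [-> | Hx]].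
  - exists 0; split; [lia | now left].
  - exists (2 ^ l); split; [simpl; lia | now right; left].
  - simpl in Hx. rewrite firstn_app, length_map, length_dyadic_order in Hx.
    replace (c - (2 ^ l - 1)) with 0 in Hx by lia.
    rewrite app_nil_r, firstn_map in Hx. apply in_map_iff in Hx as [y [<- Hy]].
    exists y; split; [reflexivity | now right; right].
Qed.

Lemma dyadic_grid_S_high l c x : 2 ^ l - 1 <= c <= 2 ^ S l - 1 ->
  dyadic_grid (S l) c x ->
  x <= 2 ^ S l /\ ((exists y, x = 2 * y) \/ x < 2 * (c - (2 ^ l - 1))).
Proof.
  intros Hc Hx. pose proof (pow2_ge_1 l). assert (E : 2 ^ S l = 2 * 2 ^ l) by reflexivity.
  destruct Hx as [-> | [-> | Hx]].
  - split; [lia | left; exists 0; lia].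
  - split; [lia | left; exists (2 ^ l); lia].
  - simpl in Hx. rewrite firstn_app, length_map, length_dyadic_order, firstn_all2 in Hx
      by (rewrite length_map, length_dyadic_order; lia).
    rewrite firstn_map, firstn_seq in Hx by lia.
    apply in_app_iff in Hx; destruct Hx as [Hx | Hx].
    + apply in_map_iff in Hx as [y [<- Hy]].
      apply in_dyadic_order in Hy. split; [lia | left; exists y; lia].
    + apply in_map_iff in Hx as [y [<- Hy]].
      apply in_seq in Hy. lia.
Qed.

(* While level l is being filled, the old grid is doubled (spacing at least 2) and
   the new odd points are inserted left to right (spacing 1 below the last one). *)
Lemma dyadic_grid_gap l c a b : c <= 2 ^ l - 1 -> a < b ->
  dyadic_grid l c a -> dyadic_grid l c b -> 2 ^ l + b <= 2 * S c * (b - a).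
Proof.
  revert c a b; induction l as [|l IH]; intros c a b Hc Hab Ha Hb.
  - simpl in Hc. replace c with 0 in * by lia.
    destruct Ha as [-> | [-> | []]], Hb as [-> | [-> | []]]; simpl in *; lia.
  - pose proof (pow2_ge_1 l). assert (E : 2 ^ S l = 2 * 2 ^ l) by reflexivity.
    destruct (Nat.le_gt_cases c (2 ^ l - 1)) as [Hlow | Hhigh].
    + apply dyadic_grid_S_low in Ha as [a' [-> Ha]], Hb as [b' [-> Hb]]; try lia.
      specialize (IH c a' b' Hlow ltac:(lia) Ha Hb). nia.
    + apply dyadic_grid_S_high in Ha as [_ Ha], Hb as [Hb1 Hb]; try lia.
      assert (b <= 2 * (c - (2 ^ l - 1)) \/ 2 <= b - a)
        by (destruct Ha as [[y ->] | Ha], Hb as [[z ->] | Hb]; lia).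
      nia.
Qed.

Open Scope R_scope.

Lemma rsum_S a k : rsum a (S k) = / INR a + rsum (S a) k.
Proof. reflexivity. Qed.

Lemma rsum_add a k1 k2 : rsum a (k1 + k2) = rsum a k1 + rsum (a + k1) k2.
Proof.
  revert a; induction k1 as [|k1 IH]; intro a.
  - rewrite Nat.add_0_l, Nat.add_0_r. change (rsum a 0) with 0. ring.
  - rewrite Nat.add_succ_l, !rsum_S, IH, Nat.add_succ_r, Nat.add_succ_l. ring.
Qed.

Lemma rsum_ge a k : (1 <= a)%nat -> INR k / INR (a + k) <= rsum a k.
Proof.
  revert a; induction k as [|k IH]; intros a Ha.
  - unfold rsum; simpl. unfold Rdiv. lra.
  - rewrite rsum_S. specialize (IH (S a) ltac:(lia)).
    rewrite Nat.add_succ_l, <- Nat.add_succ_r in IH.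
    assert (Ha' : 1 <= INR a) by (apply (le_INR 1); exact Ha).
    assert (HM : INR a <= INR (a + S k)) by (apply le_INR; lia).
    assert (/ INR (a + S k) <= / INR a) by (apply Rinv_le_contravar; lra).
    rewrite S_INR. unfold Rdiv in *. lra.
Qed.

Lemma sigmaH_pos r : 0 < sigmaH r.
Proof.
  eapply Rlt_le_trans; [| apply rsum_ge; lia].
  apply Rdiv_lt_0_compat; apply lt_0_INR; lia.
Qed.

Lemma qpos_0 r : qpos r 0 = 0.
Proof. unfold qpos, rsum; simpl. ring. Qed.

Lemma qpos_last r : qpos r (S r) = 1.
Proof. unfold qpos. fold (sigmaH r). field. apply Rgt_not_eq, sigmaH_pos. Qed.

Lemma qpos_sub r a b : (a <= b)%nat ->
  qpos r b - qpos r a = / sigmaH r * rsum (S r + a) (b - a).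
Proof.
  intro Hab. unfold qpos. replace b with (a + (b - a))%nat at 1 by lia.
  rewrite rsum_add. ring.
Qed.

Lemma qpos_sub_ge r a b : (a <= b)%nat ->
  / sigmaH r * (INR (b - a) / INR (S r + b)) <= qpos r b - qpos r a.
Proof.
  intro Hab. rewrite qpos_sub by exact Hab.
  apply Rmult_le_compat_l; [left; apply Rinv_0_lt_compat, sigmaH_pos |].
  replace (S r + b)%nat with (S r + a + (b - a))%nat by lia. apply rsum_ge. lia.
Qed.

Lemma qpos_lt r a b : (a < b)%nat -> qpos r a < qpos r b.
Proof.
  intro Hab. apply Rlt_0_minus. eapply Rlt_le_trans; [| apply qpos_sub_ge; lia].
  apply Rmult_lt_0_compat; [apply Rinv_0_lt_compat, sigmaH_pos |].
  apply Rdiv_lt_0_compat; apply lt_0_INR; lia.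
Qed.

Lemma qpos_gap r c a b : (a < b)%nat -> (S r + b <= 2 * S c * (b - a))%nat ->
  / (2 * sigmaH r * INR (S c)) <= qpos r b - qpos r a.
Proof.
  intros Hab Hgap. eapply Rle_trans; [| apply qpos_sub_ge; lia].
  assert (Hs := sigmaH_pos r).
  assert (HM : 0 < INR (S r + b)) by (apply lt_0_INR; lia).
  assert (HD : 0 < INR (b - a)) by (apply lt_0_INR; lia).
  assert (HC : 0 < INR (S c)) by (apply lt_0_INR; lia).
  apply le_INR in Hgap. rewrite !mult_INR in Hgap. simpl (INR 2) in Hgap.
  replace (/ (2 * sigmaH r * INR (S c)))
    with (/ sigmaH r * (INR (b - a) / (2 * INR (S c) * INR (b - a)))) by (field; lra).
  apply Rmult_le_compat_l; [left; apply Rinv_0_lt_compat; exact Hs |].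
  apply Rmult_le_compat_l; [lra |]. apply Rinv_le_contravar; lra.
Qed.

Lemma valid_instance_s_mono n s d : valid_instance n s d ->
  forall i j, (j <= i)%nat -> (i < n)%nat -> s j <= s i.
Proof.
  intros [_ [_ [_ Hs]]] i. induction i as [|i IH]; intros j Hj Hi.
  - replace j with 0%nat by lia. lra.
  - destruct (Nat.eq_dec j (S i)) as [-> | Hne]; [lra |].
    apply Rle_trans with (s i); [apply IH; lia | apply Hs; exact Hi].
Qed.

Lemma d_le_Tmax n d i : (i < n)%nat -> d i <= Tmax n d.
Proof.
  intro Hi. unfold Tmax. assert (Hin : In (d i) (map d (seq 0 n))) by (apply in_map, in_seq; lia).
  induction (map d (seq 0 n)) as [|y l IH]; simpl in *; [contradiction |].
  destruct Hin as [-> | Hin]; [apply Rmax_l | eapply Rle_trans; [apply IH, Hin | apply Rmax_r]].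
Qed.

Lemma valid_instance_s_range n s d i : valid_instance n s d -> (i < n)%nat ->
  0 <= s i <= Tmax n d.
Proof.
  intros Hv Hi. pose proof Hv as [_ [Hs0 [Hsd _]]]. split.
  - rewrite <- Hs0. apply (valid_instance_s_mono n s d Hv); lia.
  - apply Rle_trans with (d i); [left; apply Hsd, Hi | apply d_le_Tmax, Hi].
Qed.

Lemma present_b_spec s d t j : present_b s d t j = true <-> present s d j t.
Proof.
  unfold present_b, present.
  destruct (Rle_dec (s j) t), (Rle_dec t (d j)); split; intro H; try discriminate; lra.
Qed.

Lemma npresent_ge n s d t J : NoDup J ->
  (forall j, In j J -> (j < n)%nat /\ present s d j t) -> (length J <= npresent n s d t)%nat.
Proof.
  intros Hnd HJ. apply NoDup_incl_length; [exact Hnd |].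
  intros j Hj. apply HJ in Hj as [Hj Hp]. apply filter_In. split.
  - apply in_seq. lia.
  - apply present_b_spec, Hp.
Qed.

Lemma Qhat_S X i p : Qhat X (S i) p <-> Qhat X i p \/ X i = p.
Proof.
  split.
  - intros [j [Hj E]]. destruct (Nat.eq_dec j i) as [-> | Hne]; [now right |].
    left; exists j; split; [lia | exact E].
  - intros [[j [Hj E]] | E]; [exists j | exists i]; split; auto; lia.
Qed.

Lemma largest_gap_mid_notin A x : largest_gap_mid A x -> ~ A x.
Proof.
  intros [a [b [_ [_ [Hab [Hempty [_ ->]]]]]]] Hx.
  apply (Hempty ((a + b) / 2)); [now left | lra].
Qed.

Section Algorithm.
Variables (Q tau : list R) (n : nat) (s d X : nat -> R).
Hypothesis Hnd : NoDup tau.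
Hypothesis HQ : incl tau Q.
Hypothesis Hv : valid_instance n s d.
Hypothesis Hrun : alg_run Q tau n s d X.
Hypothesis Hm : forall t, 0 <= t <= Tmax n d -> (npresent n s d t <= length tau)%nat.

Lemma alg_new_position i : (i < n)%nat -> ~ (exists p, vacant s d X i p) -> ~ Qhat X i (X i).
Proof.
  intros Hi Hfull. destruct (Hrun i Hi) as [_ [Hnext Hmid]].
  destruct (classic (exists q, In q Q /\ ~ Qhat X i q)) as [Hnew | Hall].
  - now destruct (Hnext Hfull Hnew) as [k [_ [_ [Hk _]]]].
  - apply largest_gap_mid_notin, Hmid; [exact Hfull |].
    intros q Hq. apply NNPP. intro Hnq. apply Hall. now exists q.
Qed.

Lemma alg_present_distinct i j t : (i < n)%nat -> (j < n)%nat -> i <> j ->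
  present s d i t -> present s d j t -> X i <> X j.
Proof.
  revert i j. enough (H : forall i j, (j < i)%nat -> (i < n)%nat ->
    present s d i t -> present s d j t -> X i <> X j).
  { intros i j Hi Hj Hij Pi Pj.
    destruct (Nat.lt_total i j) as [Hlt | [Heq | Hlt]]; [| contradiction | now apply H].
    intro E. symmetry in E. revert E. now apply H. }
  intros i j Hji Hi [Hsi _] [_ Hdj] E.
  assert (Hocc : occupied s d X i (X j)) by (exists j; repeat split; auto; lra).
  destruct (classic (exists p, vacant s d X i p)) as [Hvac | Hfull].
  - destruct (proj1 (Hrun i Hi) Hvac) as [_ Hno]. rewrite E in Hno. contradiction.
  - apply (alg_new_position i Hi Hfull). rewrite E. now exists j.
Qed.

Lemma alg_vacant_step i : (i < n)%nat -> (exists p, vacant s d X i p) ->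
  forall p, Qhat X (S i) p <-> Qhat X i p.
Proof.
  intros Hi Hvac p. rewrite Qhat_S. split; [| now left].
  intros [H | <-]; [exact H |]. now apply (proj1 (Hrun i Hi)).
Qed.

(* When no used position is vacant, the [c] used positions and the arriving point
   are all present at time [s i]. *)
Lemma alg_full_npresent i c : (i < n)%nat -> ~ (exists p, vacant s d X i p) ->
  (forall p, Qhat X i p <-> In p (firstn c tau)) -> (c <= length tau)%nat ->
  (S c <= npresent n s d (s i))%nat.
Proof.
  intros Hi Hfull Hpre Hc.
  assert (Hocc : forall p, In p (firstn c tau) ->
            exists j, ((j < i)%nat /\ s i <= d j) /\ X j = p).
  { intros p Hp. apply Hpre in Hp.
    destruct (classic (occupied s d X i p)) as [[j [Hj [Hsd E]]] | Hno].
    - now exists j.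
    - exfalso. apply Hfull. now exists p. }
  destruct (NoDup_preimage X _ _ (NoDup_firstn tau c Hnd) Hocc) as [J [HJ [HlJ HJocc]]].
  rewrite length_firstn, Nat.min_l in HlJ by exact Hc.
  rewrite <- HlJ. change (S (length J)) with (length (i :: J)).
  apply npresent_ge.
  - constructor; [| exact HJ]. intro HiJ. apply HJocc in HiJ as [[? _] _]. lia.
  - pose proof Hv as [_ [_ [Hsd _]]]. intros j [<- | Hj].
    + split; [exact Hi |]. split; [lra | left; apply Hsd, Hi].
    + apply HJocc in Hj as [[Hji Hdj] _]. split; [lia |]. split; [| exact Hdj].
      apply (valid_instance_s_mono n s d Hv); lia.
Qed.

Lemma alg_full_next i c : (i < n)%nat -> ~ (exists p, vacant s d X i p) ->
  (forall p, Qhat X i p <-> In p (firstn c tau)) -> (c < length tau)%nat ->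
  X i = nth c tau 0.
Proof.
  intros Hi Hfull Hpre Hc.
  assert (Hfresh : ~ Qhat X i (nth c tau 0))
    by (rewrite Hpre; apply nth_notin_firstn; assumption).
  destruct (proj1 (proj2 (Hrun i Hi)) Hfull) as [k [Hk [<- [Hnk Hbefore]]]].
  { exists (nth c tau 0). split; [apply HQ, nth_In, Hc | exact Hfresh]. }
  destruct (Nat.lt_total k c) as [Hlt | [-> | Hgt]]; [| reflexivity |].
  - exfalso. apply Hnk, Hpre, nth_In_firstn; assumption.
  - exfalso. apply Hfresh, Hbefore, Hgt.
Qed.

Lemma alg_used_prefix i : (i <= n)%nat -> exists c,
  (c <= length tau)%nat /\ (forall p, Qhat X i p <-> In p (firstn c tau)) /\
  (c = 0%nat \/ exists t, 0 <= t <= Tmax n d /\ (c <= npresent n s d t)%nat).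
Proof.
  induction i as [|i IH]; intro Hi.
  - exists 0%nat. split; [lia | split; [| now left]].
    intro p. split; [intros [j [Hj _]]; lia | intros []].
  - destruct IH as [c [Hc [Hpre Hwit]]]; [lia |].
    destruct (classic (exists p, vacant s d X i p)) as [Hvac | Hfull].
    + exists c. split; [exact Hc | split; [| exact Hwit]].
      intro p. rewrite (alg_vacant_step i ltac:(lia) Hvac p). apply Hpre.
    + assert (Hcount := alg_full_npresent i c ltac:(lia) Hfull Hpre Hc).
      assert (Hsi := valid_instance_s_range n s d i Hv ltac:(lia)).
      assert (Hlt : (c < length tau)%nat) by (specialize (Hm _ Hsi); lia).
      exists (S c). split; [lia | split].
      * intro p. rewrite Qhat_S, Hpre, (firstn_S_nth tau c 0 Hlt), in_app_iff,
          (alg_full_next i c ltac:(lia) Hfull Hpre Hlt).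
        simpl. intuition.
      * right. exists (s i). split; assumption.
Qed.
End Algorithm.

Lemma Rbar_glb_le E x : E x -> Rbar_le (Rbar_glb E) x.
Proof. intro Hx. exact (proj1 (proj2_sig (Rbar_ex_glb E)) x Hx). Qed.

Lemma Rbar_glb_ge E b : (forall x, E x -> Rbar_le b x) -> Rbar_le b (Rbar_glb E).
Proof. intro Hb. exact (proj2 (proj2_sig (Rbar_ex_glb E)) b Hb). Qed.

Lemma Rbar_lub_le E b : (forall x, E x -> Rbar_le x b) -> Rbar_le (Rbar_lub E) b.
Proof. intro Hb. exact (proj2 (proj2_sig (Rbar_ex_lub E)) b Hb). Qed.

Lemma Rbar_mult_le_compat_pos (K g : R) (m : Rbar) : 0 < K -> Rbar_le g m ->
  Rbar_le (K * g) (Rbar_mult K m).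
Proof.
  intros HK Hgm. destruct m as [m | |]; simpl in Hgm; try contradiction.
  - simpl. apply Rmult_le_compat_l; lra.
  - rewrite Rbar_mult_comm, (is_Rbar_mult_unique _ _ _ (is_Rbar_mult_p_infty_pos K HK)).
    exact I.
Qed.

Lemma dmin_le_dist_bd n s d X t i : (i < n)%nat -> present s d i t ->
  Rbar_le (dmin n s d X t) (dist_bd (X i)).
Proof.
  intros Hi Pi. apply (proj1 (Glb_Rbar_correct _)). left. now exists i.
Qed.

Lemma dmin_le_dist n s d X t i j : (i < n)%nat -> (j < n)%nat -> i <> j ->
  present s d i t -> present s d j t -> Rbar_le (dmin n s d X t) (Rabs (X i - X j)).
Proof.
  intros Hi Hj Hij Pi Pj. apply (proj1 (Glb_Rbar_correct _)). right. now exists i, j.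
Qed.

Lemma dmin_ge n s d X t (g : R) :
  (forall i, (i < n)%nat -> present s d i t -> g <= dist_bd (X i)) ->
  (forall i j, (i < n)%nat -> (j < n)%nat -> i <> j -> present s d i t -> present s d j t ->
     g <= Rabs (X i - X j)) ->
  Rbar_le g (dmin n s d X t).
Proof.
  intros Hbd Hpair. apply (proj2 (Glb_Rbar_correct _)).
  intros y [[i [Hi [Pi ->]]] | [i [j [Hi [Hj [Hij [Pi [Pj ->]]]]]]]]; simpl.
  - now apply Hbd.
  - now apply Hpair.
Qed.

Lemma exists_argmax (Y : nat -> R) L : L <> [] ->
  exists m, In m L /\ forall i, In i L -> Y i <= Y m.
Proof.
  induction L as [|a L IH]; intro Hne; [congruence |].
  destruct L as [|b L].
  - exists a. split; [now left | intros i [<- | []]; lra].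
  - destruct IH as [m [Hm Hmax]]; [discriminate |].
    destruct (Rle_dec (Y a) (Y m)).
    + exists m. split; [now right | intros i [<- | Hi]; auto].
    + exists a. split; [now left |]. intros i [<- | Hi]; [lra | specialize (Hmax i Hi); lra].
Qed.

Lemma separated_points_spread (Y : nat -> R) (delta : R) (L : list nat) :
  0 <= delta -> L <> [] -> NoDup L ->
  (forall i, In i L -> delta < Y i) ->
  (forall i j, In i L -> In j L -> i <> j -> delta < Rabs (Y i - Y j)) ->
  exists m, In m L /\ INR (length L) * delta < Y m.
Proof.
  intros Hd. remember (length L) as k eqn:Hk. revert L Hk.
  induction k as [|k IH]; intros L Hk Hne Hnd Hpos Hsep.
  - destruct L; [congruence | discriminate].
  - destruct (exists_argmax Y L Hne) as [m [Hm Hmax]].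
    exists m. split; [exact Hm |].
    apply in_split in Hm as [l1 [l2 ->]].
    assert (Hsub : forall i, In i (l1 ++ l2) -> In i (l1 ++ m :: l2))
      by (intros i; rewrite !in_app_iff; simpl; tauto).
    destruct (list_eq_dec Nat.eq_dec (l1 ++ l2) []) as [Hnil | Hne'].
    + rewrite length_app in Hk. apply app_eq_nil in Hnil as [-> ->]. simpl in Hk.
      replace k with 0%nat by lia. specialize (Hpos m (in_elt m [] [])). simpl. lra.
    + destruct (IH (l1 ++ l2)) as [m' [Hm' Hy]]; [rewrite length_app in *; simpl in Hk; lia |
        exact Hne' | eapply NoDup_remove_1; eauto | intros i Hi; apply Hpos, Hsub, Hi |
        intros i j Hi Hj; apply Hsep; apply Hsub; assumption |].
      assert (Hm'm : m' <> m) by (intros ->; eapply NoDup_remove_2; eauto).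
      specialize (Hsep m' m (Hsub _ Hm') (in_elt m l1 l2) Hm'm).
      specialize (Hmax m' (Hsub _ Hm')).
      rewrite Rabs_left1 in Hsep by lra. rewrite S_INR. lra.
Qed.

Lemma dmin_le_inv_npresent n s d Y t : in_Pn n Y -> (1 <= npresent n s d t)%nat ->
  Rbar_le (dmin n s d Y t) (/ INR (S (npresent n s d t))).
Proof.
  intros HY HN. apply Rbar_not_lt_le. intro Hlt.
  set (N := npresent n s d t) in *. set (delta := / INR (S N)) in *.
  assert (HSN : 0 < INR (S N)) by (apply lt_0_INR; lia).
  assert (Hbelow : forall y : R, Rbar_le (dmin n s d Y t) y -> delta < y)
    by (intros y Hy; exact (Rbar_lt_le_trans _ _ (Finite y) Hlt Hy)).
  assert (Hbd : forall i, In i (filter (present_b s d t) (seq 0 n)) -> delta < dist_bd (Y i)).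
  { intros i Hi. apply filter_In in Hi as [Hi Pi]. apply in_seq in Hi.
    apply Hbelow, dmin_le_dist_bd; [lia | now apply present_b_spec]. }
  assert (Hpos : forall i, In i (filter (present_b s d t) (seq 0 n)) -> delta < Y i).
  { intros i Hi. pose proof (Hbd i Hi) as H.
    pose proof (Rmin_l (Rabs (Y i - 0)) (Rabs (Y i - 1))).
    apply filter_In in Hi as [Hi _]. apply in_seq in Hi. destruct (HY i ltac:(lia)).
    unfold dist_bd in H. rewrite Rabs_right in * by lra. lra. }
  destruct (separated_points_spread Y delta (filter (present_b s d t) (seq 0 n)))
    as [m [Hm Hym]].
  - left. apply Rinv_0_lt_compat, HSN.
  - intro Hnil. unfold N, npresent in HN. rewrite Hnil in HN. simpl in HN. lia.
  - apply NoDup_filter, seq_NoDup.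
  - exact Hpos.
  - intros i j Hi Hj Hij. apply filter_In in Hi as [Hi Pi], Hj as [Hj Pj].
    apply in_seq in Hi, Hj.
    apply Hbelow, dmin_le_dist; [lia | lia | exact Hij | now apply present_b_spec..].
  - pose proof (Hbd m Hm) as H. pose proof (Rmin_r (Rabs (Y m - 0)) (Rabs (Y m - 1))).
    apply filter_In in Hm as [Hm _]. apply in_seq in Hm. destruct (HY m ltac:(lia)).
    change (INR N * delta < Y m) in Hym. unfold dist_bd in H.
    rewrite (Rabs_left1 (Y m - 1)) in * by lra.
    assert (Hone : INR (S N) * delta = 1) by (unfold delta; field; lra).
    rewrite S_INR in Hone. lra.
Qed.

Lemma OPT_A_le_inv_npresent n s d t : 0 <= t <= Tmax n d -> (1 <= npresent n s d t)%nat ->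
  Rbar_le (OPT_A n s d) (/ INR (S (npresent n s d t))).
Proof.
  intros Ht HN. apply Rbar_lub_le. intros v [Y [HY ->]].
  eapply Rbar_le_trans; [apply Rbar_glb_le; now exists t | now apply dmin_le_inv_npresent].
Qed.

Definition well_spread (K : R) (tau : list R) : Prop :=
  forall c, (c <= length tau)%nat ->
    (forall x y, In x (firstn c tau) -> In y (firstn c tau) -> x <> y ->
       / (K * INR (S c)) <= Rabs (x - y)) /\
    (forall x, In x (firstn c tau) -> / (K * INR (S c)) <= dist_bd x).

Theorem alg_run_competitive (Q tau : list R) (K : R) (n : nat) (s d X : nat -> R) :
  0 < K -> NoDup tau -> incl tau Q -> well_spread K tau -> valid_instance n s d ->
  (forall t, 0 <= t <= Tmax n d -> (npresent n s d t <= length tau)%nat) ->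
  alg_run Q tau n s d X -> Rbar_le (OPT_A n s d) (Rbar_mult K (minval n s d X)).
Proof.
  intros HK Hnd HQ Hspread Hv Hm Hrun.
  destruct (alg_used_prefix Q tau n s d X Hnd HQ Hv Hrun Hm n (le_n n))
    as [c [Hc [Hpre Hwit]]].
  assert (Hused : forall i, (i < n)%nat -> In (X i) (firstn c tau))
    by (intros i Hi; apply Hpre; now exists i).
  assert (Hn : (0 < n)%nat) by apply Hv.
  destruct Hwit as [-> | [t0 [Ht0 Hct0]]]; [now destruct (Hused 0%nat Hn) |].
  assert (Hc1 : (1 <= c)%nat) by (destruct c; [now destruct (Hused 0%nat Hn) | lia]).
  destruct (Hspread c Hc) as [Hpair Hbd].
  assert (Hmin : Rbar_le (/ (K * INR (S c))) (minval n s d X)).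
  { apply Rbar_glb_ge. intros v [t [_ ->]]. apply dmin_ge.
    - intros i Hi _. now apply Hbd, Hused.
    - intros i j Hi Hj Hij Pi Pj. apply Hpair; [now apply Hused | now apply Hused |].
      exact (alg_present_distinct Q tau n s d X Hrun i j t Hi Hj Hij Pi Pj). }
  eapply Rbar_le_trans; [apply (OPT_A_le_inv_npresent n s d t0 Ht0); lia |].
  eapply Rbar_le_trans; [| apply (Rbar_mult_le_compat_pos K _ _ HK Hmin)].
  assert (HSc : 0 < INR (S c)) by (apply lt_0_INR; lia).
  cbn -[INR]. replace (K * / (K * INR (S c))) with (/ INR (S c)) by (field; lra).
  apply Rinv_le_contravar; [exact HSc | apply le_INR; lia].
Qed.

Lemma qpos_injective r a b : qpos r a = qpos r b -> a = b.
Proof.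
  intro E. destruct (Nat.lt_total a b) as [H | [H | H]]; [| exact H |];
    apply (qpos_lt r) in H; lra.
Qed.

Lemma dyadic_positions_well_spread l :
  well_spread (2 * sigmaH (2 ^ l - 1)) (map (qpos (2 ^ l - 1)) (dyadic_order l)).
Proof.
  intros c Hc. set (r := (2 ^ l - 1)%nat) in *.
  rewrite length_map, length_dyadic_order in Hc.
  assert (Hr : S r = (2 ^ l)%nat) by (pose proof (pow2_ge_1 l); unfold r; lia).
  set (g := / (2 * sigmaH r * INR (S c))).
  assert (Hgap : forall a b, (a < b)%nat -> dyadic_grid l c a -> dyadic_grid l c b ->
            g <= Rabs (qpos r b - qpos r a)).
  { intros a b Hab Ha Hb.
    rewrite Rabs_right by (apply Rle_ge, Rlt_le, Rlt_0_minus, qpos_lt, Hab).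
    apply qpos_gap; [exact Hab |]. rewrite Hr. now apply dyadic_grid_gap. }
  assert (Hin : forall x, In x (firstn c (map (qpos r) (dyadic_order l))) ->
            exists a, x = qpos r a /\ dyadic_grid l c a /\ (1 <= a < 2 ^ l)%nat).
  { intros x Hx. rewrite firstn_map in Hx. apply in_map_iff in Hx as [a [<- Ha]].
    exists a. split; [reflexivity | split; [now right; right |]].
    now apply in_dyadic_order, (In_firstn _ c). }
  split.
  - intros x y Hx Hy Hxy.
    destruct (Hin x Hx) as [a [-> [Ha _]]], (Hin y Hy) as [b [-> [Hb _]]].
    destruct (Nat.lt_total a b) as [Hab | [-> | Hab]]; [| contradiction |].
    + rewrite Rabs_minus_sym. now apply Hgap.
    + now apply Hgap.
  - intros x Hx. destruct (Hin x Hx) as [a [-> [Ha Ha']]].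
    pose proof (Hgap 0%nat a ltac:(lia) (or_introl eq_refl) Ha) as G0.
    pose proof (Hgap a (2 ^ l)%nat ltac:(lia) Ha (or_intror (or_introl eq_refl))) as G1.
    rewrite qpos_0 in G0. rewrite <- Hr, qpos_last, Rabs_minus_sym in G1.
    unfold dist_bd. apply Rmin_glb; assumption.
Qed.

Theorem lemma2 (l : nat) (hl : (1 <= l)%nat) :
  let r := (2 ^ l - 1)%nat in
  exists tau : list R,
    Permutation tau (Qlist r) /\
    forall (n : nat) (s d : nat -> R),
      valid_instance n s d ->
      (forall t, 0 <= t <= Tmax n d -> (npresent n s d t <= r)%nat) ->
      forall X : nat -> R,
        alg_run (Qlist r) tau n s d X ->
        Rbar_le (OPT_A n s d) (Rbar_mult (Finite (2 * sigmaH r)) (minval n s d X)).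
Proof.
  intro r. set (tau := map (qpos r) (dyadic_order l)).
  assert (Hperm : Permutation tau (Qlist r)) by apply Permutation_map, dyadic_order_perm.
  exists tau. split; [exact Hperm |].
  intros n s d Hv Hm X Hrun. apply (alg_run_competitive (Qlist r) tau).
  - pose proof (sigmaH_pos r). lra.
  - apply (FinFun.Injective_map_NoDup (qpos_injective r)), NoDup_dyadic_order.
  - intros x Hx. exact (Permutation_in _ Hperm Hx).
  - apply dyadic_positions_well_spread.
  - exact Hv.
  - unfold tau. now rewrite length_map, length_dyadic_order.
  - exact Hrun.
Qed.
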